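(* Let $\mathbb X$ be a separable reflexive Banach space, let $\mu\in\mathbb X$, and let $\hat\mu_1,\ldots,\hat\mu_k$ be independent random elements of $\mathbb X$. Fix $\alpha\in(0,\tfrac12)$. Let $0<p<\alpha$ and $\varepsilon>0$ be such that $$\Pr\big(\|\hat\mu_j-\mu\|>\varepsilon\big)\le p\quad\text{for all }1\le j\le k.$$ Let $\hat\mu=\mathrm{med}(\hat\mu_1,\ldots,\hat\mu_k)$. Then $$\Pr\big(\|\hat\mu-\mu\|>C_\alpha\varepsilon\big)\le e^{-k\psi(\alpha;p)}.$$ Here $C_\alpha=\frac{2(1-\alpha)}{1-2\alpha}$ in general, and $C_\alpha=(1-\alpha)\sqrt{\frac1{1-2\alpha}}$ when $\mathbb X$ is a Hilbert space.
   Context: $\mathrm{med}(x_1,\ldots,x_k)$ denotes a geometric median, i.e. any minimizer over $y\in\mathbb X$ of $\sum_{j=1}^k\|y-x_j\|$. For $0<p<\alpha<\tfrac12$, $$\psi(\alpha;p)=(1-\alpha)\log\frac{1-\alpha}{1-p}+\alpha\log\frac{\alpha}{p}.$$ *)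

From HB Require Import structures.
From mathcomp Require Import all_boot all_order all_algebra.
From mathcomp Require Import all_classical all_reals all_analysis.
Set Implicit Arguments. Unset Strict Implicit. Unset Printing Implicit Defensive.
Import Order.TTheory GRing.Theory Num.Theory.
Import numFieldNormedType.Exports.
Local Open Scope classical_set_scope.
Local Open Scope ring_scope.

Definition psi {R : realType} (alpha p : R) : R :=
  (1 - alpha) * ln ((1 - alpha) / (1 - p)) + alpha * ln (alpha / p).

Definition separable {R : realType} (X : normedModType R) : Prop :=
  exists D : set X, countable D /\ dense D.

Definition dual_elt {R : realType} (X : normedModType R) (f : X -> R) : Prop :=
  (forall (a : R) (x y : X), f (a *: x + y) = a * f x + f y) /\
  exists M : R, forall x : X, `|f x| <= M * `|x|.

(* bounded linear functionals on X^* (operator norm on X^* expressed via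
   the admissible bounds M of f), i.e. elements of X^** *)
Definition bidual_elt {R : realType} (X : normedModType R)
    (Phi : (X -> R) -> R) : Prop :=
  (forall (a : R) (f g : X -> R), dual_elt f -> dual_elt g ->
      Phi (fun x => a * f x + g x) = a * Phi f + Phi g) /\
  exists C : R, forall (f : X -> R) (M : R), dual_elt f -> 0 <= M ->
      (forall x : X, `|f x| <= M * `|x|) -> `|Phi f| <= C * M.

Definition reflexive_space {R : realType} (X : normedModType R) : Prop :=
  forall Phi : (X -> R) -> R, bidual_elt Phi ->
    exists x : X, forall f : X -> R, dual_elt f -> Phi f = f x.

(* X is a Hilbert space: its norm comes from an inner product
   (completeness is part of the ambient structure) *)
Definition hilbert_norm {R : realType} (X : normedModType R) : Prop :=
  exists ip : X -> X -> R,
    (forall x y : X, ip x y = ip y x) /\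
    (forall (a : R) (x y z : X), ip (a *: x + y) z = a * ip x z + ip y z) /\
    (forall x : X, `|x| ^+ 2 = ip x x).

Definition borel_set {R : realType} (X : normedModType R) (B : set X) : Prop :=
  <<s [set U : set X | open U] >> B.

Definition random_elt {d} {T : measurableType d} {R : realType}
    (X : normedModType R) (f : T -> X) : Prop :=
  forall B : set X, borel_set B -> measurable (f @^-1` B).

Definition mutually_independent {d} {T : measurableType d} {R : realType}
    (P : probability T R) (X : normedModType R) (k : nat)
    (f : 'I_k -> T -> X) : Prop :=
  forall B : 'I_k -> set X, (forall j, borel_set (B j)) ->
    P (\bigcap_(j in [set: 'I_k]) (f j @^-1` B j)) =
    (\prod_(j < k) P (f j @^-1` B j))%E.

Definition is_geomed {R : realType} (X : normedModType R) (k : nat)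
    (xs : 'I_k -> X) (y : X) : Prop :=
  forall z : X, \sum_(j < k) `|y - xs j| <= \sum_(j < k) `|z - xs j|.

From HB Require Import structures.
From mathcomp Require Import all_boot all_order all_algebra.
From mathcomp Require Import all_classical all_reals all_analysis.
From mathcomp Require Import ring lra.
Import Order.TTheory GRing.Theory Num.Theory.
Import numFieldNormedType.Exports.
Local Open Scope classical_set_scope.
Local Open Scope ring_scope.

(* If the geometric median [y] lies farther than [C_alpha * eps] from [mu], then
   at least [alpha * k] of the points [x_j] lie farther than [eps] from [mu]: in a
   normed space this follows from comparing the median objective at [y] and at
   [mu] through the triangle inequality, in a Hilbert space from its first-order
   variation along the segment from [y] towards [mu].  The number of far points is
   a sum of independent Bernoulli variables of means at most [p]; summing over
   the [2^k] success patterns, the exponential Chernoff bound with tilt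
   [t = alpha (1 - p) / (p (1 - alpha))] gives [exp (- k psi alpha p)]. *)

Lemma sum_if_mem_set {R : comNzRingType} (k : nat) (B : {set 'I_k}) (u v : R) :
  \sum_(j < k) (if j \in B then u else v) = #|B|%:R * u + (k%:R - #|B|%:R) * v.
Proof.
transitivity (\sum_(j < k) (v + (if j \in B then u - v else 0))).
  by apply: eq_bigr => j _; case: ifP => _; [rewrite addrC subrK | rewrite addr0].
rewrite big_split /= sumr_const card_ord -big_mkcond /= sumr_const.
rewrite -[v *+ k]mulr_natl -[(u - v) *+ _]mulr_natl; ring.
Qed.

Section chernoff.
Variable R : realType.

Lemma chernoff_subset_sum (k : nat) (q : 'I_k -> R) (a lam : R) :
  0 <= lam -> (forall j, 0 <= q j <= 1) ->
  \sum_(J : {set 'I_k} | a <= #|J|%:R) \prod_j (if j \in J then q j else 1 - q j)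
    <= expR (- (lam * a)) * \prod_j (q j * expR lam + (1 - q j)).
Proof.
move=> lam0 q01.
rewrite bigA_distr /= mulr_sumr.
rewrite [leRHS](bigID (fun J : {set 'I_k} => a <= #|J|%:R)) /=.
rewrite -[leLHS]addr0; apply: lerD; last first.
  apply: sumr_ge0 => J _; rewrite mulr_ge0 ?expR_ge0 //.
  apply: prodr_ge0 => j _; case: ifP => _; have := q01 j; have := expR_ge0 lam; nra.
apply: ler_sum => J large_J.
have tilt : \prod_j (if j \in J then q j * expR lam else 1 - q j) =
    \prod_j (if j \in J then q j else 1 - q j) * expR (lam * #|J|%:R).
  rewrite expRM_natr -prodr_const [X in _ * X]big_mkcond -big_split /=.
  by apply: eq_bigr => j _; case: ifP; rewrite ?mulr1.
rewrite tilt mulrCA -expRD ler_peMr //.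
  by apply: prodr_ge0 => j _; case: ifP => _; have := q01 j; lra.
by apply: le_trans (expR_ge1Dx _); rewrite lerDl; nra.
Qed.

(* The minimiser over [t] of [t ^ (- alpha) * (p t + 1 - p)], at which the
   Chernoff bound becomes [exp (- psi alpha p)]. *)
Definition chernoff_tilt (alpha p : R) := alpha * (1 - p) / (p * (1 - alpha)).

Section tilt.
Variables alpha p : R.
Hypotheses (alpha01 : 0 < alpha < 1) (p0alpha : 0 < p < alpha).

Lemma chernoff_tilt_ge1 : 1 <= chernoff_tilt alpha p.
Proof.
case/andP: alpha01 => a0 a1; case/andP: p0alpha => p0 pa.
by rewrite ler_pdivlMr ?mulr_gt0 ?subr_gt0 //; nra.
Qed.

Lemma psi_chernoff_tilt (t := chernoff_tilt alpha p) :
  psi alpha p = alpha * ln t - ln (p * t + (1 - p)).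
Proof.
case/andP: alpha01 => a0 a1; case/andP: p0alpha => p0 pa.
have p1 : 0 < 1 - p by lra.
have a1' : 0 < 1 - alpha by lra.
have -> : p * t + (1 - p) = (1 - p) / (1 - alpha).
  by rewrite /t /chernoff_tilt; field; rewrite !gt_eqF.
rewrite /t /chernoff_tilt /psi !ln_div ?posrE ?mulr_gt0 ?divr_gt0 // !lnM ?posrE //.
lra.
Qed.

Lemma chernoff_binomial_tail (k : nat) (q : 'I_k -> R) :
  (forall j, 0 <= q j <= p) ->
  \sum_(J : {set 'I_k} | alpha * k%:R <= #|J|%:R)
     \prod_j (if j \in J then q j else 1 - q j)
    <= expR (- (k%:R * psi alpha p)).
Proof.
case/andP: alpha01 => a0 a1; case/andP: p0alpha => p0 pa => q0p.
set t := chernoff_tilt alpha p.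
have t1 : 1 <= t := chernoff_tilt_ge1.
have q01 j : 0 <= q j <= 1 by have := q0p j; lra.
apply: le_trans (@chernoff_subset_sum k q (alpha * k%:R) (ln t) (ln_ge0 t1) q01) _.
rewrite lnK ?posrE; last lra.
have mgf_le : \prod_j (q j * t + (1 - q j)) <= (p * t + (1 - p)) ^+ k.
  rewrite -[in leRHS](card_ord k) -prodr_const; apply: ler_prod => j _.
  by apply/andP; split; have := q0p j; nra.
apply: le_trans (ler_wpM2l (expR_ge0 _) mgf_le) _.
have u0 : 0 < p * t + (1 - p) by nra.
rewrite -[p * t + _]lnK ?posrE // -expRM_natl -expRD ler_expR psi_chernoff_tilt.
by rewrite le_eqVlt; apply/predU1l; ring.
Qed.

End tilt.
End chernoff.

Lemma le_measure_bigsetU {d} {T : ringOfSetsType d} {R : realFieldType}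
    (mu : {content set T -> \bar R}) {I : Type} (s : seq I) (Q : pred I)
    (F : I -> set T) :
  (forall i, measurable (F i)) ->
  (mu (\big[setU/set0]_(i <- s | Q i) F i) <= \sum_(i <- s | Q i) mu (F i))%E.
Proof.
move=> mF; elim: s => [|i s IH]; first by rewrite !big_nil measure0.
rewrite !big_cons; case: ifP => _ //.
by apply: le_trans (measureU2 _ _ _) _; [|exact: bigsetU_measurable|exact: leeD2l].
Qed.

Lemma setC_bool {T : Type} (b : T -> bool) :
  [set w | b w = false] = ~` [set w | b w].
Proof. by apply/seteqP; split => w /=; case: (b w). Qed.

Section success_pattern.
Context {d} {T : measurableType d} {R : realType} (P : probability T R) {k : nat}.
Variable b : 'I_k -> T -> bool.

Definition pattern_event (J : {set 'I_k}) : set T :=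
  \bigcap_(j in [set: 'I_k]) [set w | b j w = (j \in J)].

Hypothesis mb : forall j, measurable [set w | b j w].

Lemma measurable_success_eq j (c : bool) : measurable [set w | b j w = c].
Proof. by case: c; [exact: mb | rewrite setC_bool; apply: measurableC]. Qed.

Lemma measurable_pattern_event J : measurable (pattern_event J).
Proof.
apply: fin_bigcap_measurable => [|j _]; first exact: finite_finset.
exact: measurable_success_eq.
Qed.

Lemma success_set_bigsetU (Q : pred {set 'I_k}) :
  [set w | Q [set j | b j w]%SET] = \big[setU/set0]_(J | Q J) pattern_event J.
Proof.
apply/seteqP; split => [w Qw | w].
  rewrite -bigcup_seq_cond; exists [set j | b j w]%SET.
    by rewrite /= mem_index_enum.
  by move=> j _ /=; rewrite inE.
rewrite -bigcup_seq_cond => -[J /= /andP[_ QJ] wJ].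
suff -> : [set j | b j w]%SET = J by [].
by apply/setP => j; rewrite inE; exact: wJ.
Qed.

Lemma binomial_count_tail (alpha p : R) :
  0 < alpha < 1 -> 0 < p < alpha ->
  (forall J, P (pattern_event J) = \prod_j P [set w | b j w = (j \in J)])%E ->
  (forall j, P [set w | b j w] <= p%:E)%E ->
  (P [set w | (alpha * k%:R <= #|[set j | b j w]%SET|%:R)%R]
     <= (expR (- (k%:R * psi alpha p)))%:E)%E.
Proof.
move=> alpha01 p0alpha indep Pb.
pose q j := fine (P [set w | b j w]).
have PbE j : P [set w | b j w] = (q j)%:E by rewrite /q fineK ?fin_num_measure.
have q0p j : 0 <= q j <= p by rewrite -!lee_fin -PbE measure_ge0 Pb.
have Peq (J : {set 'I_k}) j :
    P [set w | b j w = (j \in J)] = (if j \in J then q j else 1 - q j)%:E.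
  by case: (j \in J); [exact: PbE | rewrite setC_bool probability_setC ?PbE].
rewrite (success_set_bigsetU (fun J : {set 'I_k} => alpha * k%:R <= #|J|%:R)).
apply: le_trans (le_measure_bigsetU P _ _ _ measurable_pattern_event) _.
rewrite (eq_bigr _ (fun J _ => indep J)).
under eq_bigr => J _ do rewrite (eq_bigr _ (fun j _ => Peq J j)) prodEFin.
by rewrite sumEFin lee_fin; exact: chernoff_binomial_tail.
Qed.

End success_pattern.

Section borel.
Context {R : realType} {X : normedModType R}.

Lemma borel_setC (B : set X) : borel_set B -> borel_set (~` B).
Proof. by move=> mB; rewrite -setTD; apply: sigma_algebraCD. Qed.

Lemma borel_set_dist_gt (mu : X) (c : R) : borel_set [set x : X | c < `|x - mu|].
Proof.
have dist_cont : continuous (Num.norm \o (fun x : X => x - mu)).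
  move=> x; apply: continuous_comp; last exact: norm_continuous.
  exact: (@continuousB R X X idfun (fun=> mu) x cvg_id (@cst_continuous _ _ mu x)).
apply: sub_sigma_algebra.
exact: (continuousP _).1 dist_cont _ (@open_gt _ c).
Qed.

Lemma mutually_independent_pattern {d} {T : measurableType d} (P : probability T R)
    {k : nat} (f : 'I_k -> T -> X) (B : pred X) :
  mutually_independent P f -> borel_set [set x | B x] -> forall J : {set 'I_k},
  P (pattern_event (fun j w => B (f j w)) J) =
  (\prod_(j < k) P [set w | B (f j w) = (j \in J)])%E.
Proof.
move=> indep borelB J.
pose C j := if j \in J then [set x | B x] else ~` [set x | B x].
have preimC j : f j @^-1` C j = [set w | B (f j w) = (j \in J)].
  by rewrite /C; case: (j \in J) => //; rewrite setC_bool.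
rewrite (eq_bigr _ (fun j _ => congr1 P (esym (preimC j)))).
rewrite -(indep C) => [|j]; last by rewrite /C; case: ifP => _; [|exact: borel_setC].
by rewrite /pattern_event; congr (P _); apply: eq_bigcapr => j _; rewrite preimC.
Qed.

End borel.

Section geometric_median.
Context {R : realType} {X : normedModType R}.
Context {k : nat} {xs : 'I_k -> X} {y mu : X} {eps : R}.
Hypothesis median_y : is_geomed xs y.

Let far := [set j | eps < `|xs j - mu|]%SET.

(* Compare the median objective at [y] with its value at [mu]. *)
Lemma geomed_far_count_bound :
  (k%:R - #|far|%:R) * (`|y - mu| - 2 * eps) <= #|far|%:R * `|y - mu|.
Proof.
set r := `|y - mu|.
have : 0 <= \sum_(j < k) (if j \in far then r else 2 * eps - r).
  apply: le_trans (_ : 0 <= \sum_(j < k) (`|mu - xs j| - `|y - xs j|)) _.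
    by rewrite sumrB subr_ge0; apply: median_y.
  apply: ler_sum => j _.
  have mu_side : `|mu - xs j| <= r + `|y - xs j|.
    have -> : mu - xs j = (mu - y) + (y - xs j) by rewrite addrA subrK.
    by apply: le_trans (ler_normD _ _) _; rewrite distrC.
  have y_side : r <= `|y - xs j| + `|xs j - mu|.
    rewrite /r; have -> : y - mu = (y - xs j) + (xs j - mu) by rewrite addrA subrK.
    exact: ler_normD.
  have := distrC mu (xs j); rewrite /far inE; case: ifP => far_j; lra.
rewrite sum_if_mem_set; lra.
Qed.

Lemma geomed_far_count (alpha : R) :
  0 < alpha < 1 / 2 -> 0 < eps ->
  2 * (1 - alpha) / (1 - 2 * alpha) * eps < `|y - mu| ->
  alpha * k%:R <= #|far|%:R.
Proof.
move=> /andP[a0 a1] e0; have a2 : 0 < 1 - 2 * alpha by lra.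
rewrite mulrAC ltr_pdivrMr //; set r := `|y - mu| => far_r.
have := geomed_far_count_bound; rewrite -/r; set n := #|far|%:R => bound.
have n0 : 0 <= n by rewrite ler0n.
rewrite leNgt; apply/negP => few.
have ae : 0 < alpha * eps by rewrite mulr_gt0.
case: (lerP (2 * eps) r) => [r2 | r2]; last first.
  have : 0 < (1 - 2 * alpha) * (2 * eps - r) by rewrite mulr_gt0 // subr_gt0.
  lra.
have r0 : 0 < r by lra.
have nr : n * r < alpha * k%:R * r by rewrite ltr_pM2r.
have kn : (1 - alpha) * k%:R * (r - 2 * eps) <= (k%:R - n) * (r - 2 * eps).
  by rewrite ler_wpM2r ?subr_ge0 //; lra.
have k0 : 0 < k%:R :> R by nra.
have : 0 < k%:R * ((1 - 2 * alpha) * r - 2 * (1 - alpha) * eps).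
  by rewrite mulr_gt0 // subr_gt0; lra.
lra.
Qed.

End geometric_median.

Lemma ge0_from_small_shifts {R : realFieldType} (u v : R) :
  0 <= v -> (forall s, 0 < s <= 1 -> 0 <= u + s * v) -> 0 <= u.
Proof.
move=> v0 shift_ge0; rewrite leNgt; apply/negP => u0.
have vu : 0 < v - u by lra.
have s0 : 0 < - u / (v - u) by rewrite divr_gt0 //; lra.
have s1 : - u / (v - u) <= 1 by rewrite ler_pdivrMr //; lra.
have := shift_ge0 _ (introT andP (conj s0 s1)).
have -> : u + - u / (v - u) * v = - (u ^+ 2) / (v - u) by field; rewrite gt_eqF.
by rewrite pmulr_lge0 ?invr_gt0 // oppr_ge0 leNgt exprn_even_gt0 //= lt_eqF.
Qed.

Section hilbert.
Context {R : realType} {X : normedModType R}.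
Hypothesis hilbertX : hilbert_norm X.

Lemma hilbert_normBZ_sqr (a b : X) (s : R) :
  `|a - s *: b| ^+ 2
    = `|a| ^+ 2 - s * (`|a| ^+ 2 + `|b| ^+ 2 - `|a - b| ^+ 2) + s ^+ 2 * `|b| ^+ 2.
Proof.
case: hilbertX => ip [ipC [ipDZ normE]].
have ip0 z : ip 0 z = 0 by have := ipDZ 1 0 0 z; rewrite scale1r addr0 mul1r; lra.
have ipBZ c x1 x2 z : ip (x1 - c *: x2) z = ip x1 z - c * ip x2 z.
  by rewrite addrC -scaleNr ipDZ addrC mulNr.
have expand c : `|a - c *: b| ^+ 2 = `|a| ^+ 2 - 2 * c * ip a b + c ^+ 2 * `|b| ^+ 2.
  rewrite !normE ipBZ (ipC a) (ipC b (a - c *: b)) !ipBZ (ipC b a); ring.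
have -> : a - b = a - 1 *: b by rewrite scale1r.
by rewrite !expand; ring.
Qed.

(* With [a = y - x] and [b = y - mu]: moving [y] towards [mu] by [s] brings it
   closer to every [x] with [|x - mu| <= eps], at rate [sqrt (|b|^2 - eps^2)]. *)
Lemma hilbert_dist_step (a b : X) (eps s : R) :
  `|a - b| <= eps -> eps < `|b| -> 0 < s ->
  `|a - s *: b| <= `|a| - s * Num.sqrt (`|b| ^+ 2 - eps ^+ 2)
                   + s ^+ 2 * (`|b| ^+ 2 / (2 * (`|b| - eps))).
Proof.
set A := `|a|; set r := `|b|; set N := `|a - s *: b| => ab_eps eps_r s0.
set D := r ^+ 2 - eps ^+ 2; set sd := Num.sqrt D; set K := r ^+ 2 / (2 * (r - eps)).
have r_A : r - eps <= A.
  have : r <= A + `|a - b| by rewrite /r /A -{1}(subKr a b) ler_normB.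
  lra.
have A0 : 0 < A by lra.
have eps0 : 0 <= eps := le_trans (normr_ge0 _) ab_eps.
have D0 : 0 <= D by rewrite /D; nra.
have sd2 : sd ^+ 2 = D by rewrite sqr_sqrtr.
have K0 : 0 <= K by rewrite /K divr_ge0 ?sqr_ge0 // mulr_ge0 //; lra.
have K_A : r ^+ 2 <= 2 * A * K.
  have -> : r ^+ 2 = 2 * (r - eps) * K by rewrite /K mulrC divfK // gt_eqF //; lra.
  by rewrite ler_wpM2r // ler_pM2l //; lra.
have ab2 : `|a - b| ^+ 2 <= eps ^+ 2 by rewrite ler_pXn2r ?nnegrE.
have N2 := hilbert_normBZ_sqr a b s; rewrite -/N -/A -/r in N2.
have first_order : s * (2 * A * sd) <= s * (A ^+ 2 + r ^+ 2 - `|a - b| ^+ 2).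
  rewrite ler_pM2l //; have := sqr_ge0 (A - sd); rewrite /D in sd2; lra.
have second_order : s ^+ 2 * r ^+ 2 <= s ^+ 2 * (2 * A * K).
  by rewrite ler_wpM2l ?sqr_ge0.
have AM_GM : 2 * A * N <= N ^+ 2 + A ^+ 2 by have := sqr_ge0 (N - A); lra.
rewrite -(ler_pM2l (_ : 0 < 2 * A)); lra.
Qed.

Section hilbert_median.
Context {k : nat} {xs : 'I_k -> X} {y mu : X} {eps : R}.
Hypothesis median_y : is_geomed xs y.

Let far := [set j | eps < `|xs j - mu|]%SET.

(* Compare the objective at [y] with its value at [y - s (y - mu)], [s -> 0]. *)
Lemma hilbert_geomed_far_count_bound : eps < `|y - mu| ->
  (k%:R - #|far|%:R) * Num.sqrt (`|y - mu| ^+ 2 - eps ^+ 2) <= #|far|%:R * `|y - mu|.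
Proof.
set r := `|y - mu|; set sd := Num.sqrt _; set n := #|far|%:R => eps_r.
set K := r ^+ 2 / (2 * (r - eps)).
have K0 : 0 <= K by rewrite /K divr_ge0 ?sqr_ge0 // mulr_ge0 //; lra.
have n_k : n <= k%:R by rewrite ler_nat -[X in (_ <= X)%N]card_ord max_card.
rewrite -subr_ge0; apply: (@ge0_from_small_shifts _ _ ((k%:R - n) * K)).
  by rewrite mulr_ge0 // subr_ge0.
move=> s /andP[s0 _]; rewrite -(pmulr_rge0 _ s0).
have := median_y (y - s *: (y - mu)); rewrite -subr_ge0 -sumrB.
move/le_trans; apply.
apply: le_trans (_ : _ <= \sum_(j < k) (if j \in far then s * r
                                        else - (s * sd) + s ^+ 2 * K)) _.
  apply: ler_sum => j _.
  rewrite addrAC; set a := y - xs j.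
  rewrite /far inE; case: ltrP => [_ | near_j].
    by have := ler_normB a (s *: (y - mu)); rewrite normrZ gtr0_norm // -/r; lra.
  have ab : `|a - (y - mu)| <= eps by rewrite /a opprB addrC addrA subrK distrC.
  by have := hilbert_dist_step _ _ _ _ ab eps_r s0; rewrite -/r -/sd -/K; lra.
by rewrite sum_if_mem_set le_eqVlt; apply/predU1l; ring.
Qed.

Lemma hilbert_geomed_far_count (alpha : R) :
  0 < alpha < 1 / 2 -> 0 < eps ->
  (1 - alpha) * Num.sqrt (1 / (1 - 2 * alpha)) * eps < `|y - mu| ->
  alpha * k%:R <= #|far|%:R.
Proof.
move=> /andP[a0 a1] e0; have a2 : 0 < 1 - 2 * alpha by lra.
set r := `|y - mu|; set c := _ * eps => c_r.
have c0 : 0 <= c by rewrite /c !mulr_ge0 ?sqrtr_ge0 //; lra.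
have sqr_c_r : (1 - alpha) ^+ 2 * eps ^+ 2 < (1 - 2 * alpha) * r ^+ 2.
  have -> : (1 - alpha) ^+ 2 * eps ^+ 2 = (1 - 2 * alpha) * c ^+ 2.
    by rewrite /c !exprMn sqr_sqrtr ?divr_ge0 ?ltW //; field; rewrite gt_eqF.
  by rewrite ltr_pM2l // ltr_pXn2r ?nnegrE ?normr_ge0.
have eps_r : eps < r.
  rewrite ltNge; apply/negP => r_eps.
  have : r ^+ 2 <= eps ^+ 2 by rewrite ler_pXn2r ?nnegrE ?normr_ge0 // ltW.
  have := sqr_ge0 (alpha * eps); nra.
have := hilbert_geomed_far_count_bound eps_r; rewrite -/r.
set sd := Num.sqrt _; set n := #|far|%:R => bound.
have n0 : 0 <= n by rewrite ler0n.
have sd2 : sd ^+ 2 = r ^+ 2 - eps ^+ 2.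
  by rewrite sqr_sqrtr // subr_ge0 ler_pXn2r ?nnegrE ?ltW //; lra.
have sd0 : 0 <= sd := sqrtr_ge0 _.
rewrite leNgt; apply/negP => few.
have k0 : 0 < k%:R :> R by nra.
have : (1 - alpha) * k%:R * sd < alpha * k%:R * r.
  apply: le_lt_trans (_ : _ <= (k%:R - n) * sd) _; first by rewrite ler_wpM2r //; lra.
  by apply: le_lt_trans bound _; rewrite ltr_pM2r //; lra.
rewrite -!mulrA [_ * sd]mulrC [_ * r]mulrC !mulrA ltr_pM2r // => sd_r.
have : ((1 - alpha) * sd) ^+ 2 < (alpha * r) ^+ 2.
  by rewrite ltr_pXn2r ?nnegrE ?mulr_ge0 //; lra.
rewrite !exprMn sd2; nra.
Qed.

End hilbert_median.
End hilbert.

Theorem theorem3p1 (R : realType) (X : completeNormedModType R)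
  (d : measure_display) (T : measurableType d) (P : probability T R)
  (k : nat) (muh : 'I_k -> T -> X) (mu : X) (alpha p eps : R)
  (medh : T -> X) :
  separable X -> reflexive_space X ->
  (forall j, random_elt (muh j)) ->
  mutually_independent P muh ->
  0 < alpha < 1 / 2 -> 0 < p < alpha -> 0 < eps ->
  (forall j, (P [set w | (eps < `|muh j w - mu|)%R] <= p%:E)%E) ->
  (forall w, is_geomed (fun j => muh j w) (medh w)) ->
  random_elt medh ->
  (P [set w | ((2 * (1 - alpha) / (1 - 2 * alpha)) * eps < `|medh w - mu|)%R]
     <= (expR (- (k%:R * psi alpha p)))%:E)%E /\
  (hilbert_norm X ->
   P [set w | (((1 - alpha) * Num.sqrt (1 / (1 - 2 * alpha))) * eps
                < `|medh w - mu|)%R]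
     <= (expR (- (k%:R * psi alpha p)))%:E)%E.
Proof.
move=> _ _ rand indep alpha_half p0alpha eps0 Pfar median rand_med.
have alpha01 : 0 < alpha < 1 by case/andP: alpha_half => a0 a1; rewrite a0; lra.
pose far j w := eps < `|muh j w - mu|.
have far_measurable j : measurable [set w | far j w].
  exact: rand j _ (borel_set_dist_gt mu eps).
have far_tail : (P [set w | (alpha * k%:R <= #|[set j | far j w]%SET|%:R)%R]
                  <= (expR (- (k%:R * psi alpha p)))%:E)%E.
  apply: binomial_count_tail => //.
  exact: (mutually_independent_pattern P muh (fun x => eps < `|x - mu|) indep
            (borel_set_dist_gt mu eps)).
have median_tail (C : R) :
    (forall w, C * eps < `|medh w - mu| ->
       alpha * k%:R <= #|[set j | far j w]%SET|%:R) ->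
    (P [set w | (C * eps < `|medh w - mu|)%R]
       <= (expR (- (k%:R * psi alpha p)))%:E)%E.
  move=> far_many; apply: le_trans far_tail; apply: le_measure => //; rewrite inE.
    exact: rand_med _ (borel_set_dist_gt mu _).
  rewrite (success_set_bigsetU far (fun J : {set 'I_k} => alpha * k%:R <= #|J|%:R)).
  by apply: bigsetU_measurable => J _; exact: measurable_pattern_event.
split => [|hilbertX]; apply: median_tail => w.
  exact: geomed_far_count (median w) _ alpha_half eps0.
exact: (@hilbert_geomed_far_count _ _ hilbertX _ _ _ mu eps (median w) _
          alpha_half eps0).
Qed.
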